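(* Let $A_0\subseteq V'$ be feasible for (GDSP) with $\mathrm{assoc}_S(A_0)>0$. Let $$\theta=\min\{\mathrm{pen}(A):\emptyset\neq A\subseteq V',\ A \text{ infeasible for (GDSP)}\}$$ (if no infeasible nonempty set exists, the condition on $\gamma$ below is void). Let $$\gamma>\frac{\mathrm{vol}_d(V)}{\theta}\cdot\frac{\mathrm{vol}_g(A_0)+\nu_S}{\mathrm{assoc}_S(A_0)}.$$ Consider the unconstrained problem $$\min_{\emptyset\neq A\subseteq V'} U(A),\qquad U(A):=\frac{\mathrm{vol}_g(A)+\nu_S\,\mathrm{unit}(A)+\gamma\,\mathrm{pen}(A)}{\mathrm{assoc}_S(A)},$$ with the convention $x/0=+\infty$ for $x>0$. Then: - Every minimizer of $U$ is feasible for (GDSP) and is an optimal solution of (GDSP). - Every optimal solution of (GDSP) is a minimizer of $U$. - The minimum value of $U$ equals the reciprocal of the optimal value of (GDSP).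
   Context: Let $V$ be a finite vertex set with symmetric nonnegative weights $w_{ij}=w_{ji}\ge0$ and $w_{ii}=0$. - $d_i=\sum_{j\in V}w_{ij}$, and $\mathrm{vol}_h(A)=\sum_{i\in A}h_i$ for $h:V\to\mathbb{R}$. - $\mathrm{assoc}(A)=\sum_{i,j\in A}w_{ij}$ (ordered pairs), and $\mathrm{cut}(A,B)=\sum_{i\in A,j\in B}w_{ij}$. - Fix $S\subseteq V$, $V'=V\setminus S$, and $d^S_i=\sum_{j\in S}w_{ij}$. - $g:V\to(0,\infty)$, $\mu_S=\mathrm{assoc}(S)$, $\nu_S=\mathrm{vol}_g(S)$. - $\mathrm{unit}(A)=1$ if $A\ne\emptyset$ and $0$ otherwise. - For $A\subseteq V'$: $\mathrm{assoc}_S(A)=\mathrm{vol}_d(A)-\mathrm{cut}(A,V'\setminus A)+\mathrm{vol}_{d^S}(A)+\mu_S\,\mathrm{unit}(A)$. Constraint data: - Vectors $M_1,\dots,M_p\in[0,\infty)^V$ and reals $k_j,l_j$ for $j=1,\dots,p$. - A symmetric function $\mathrm{dist}:V\times V\to[0,\infty)$ with $\mathrm{dist}(u,u)=0$, and a threshold $d_0\ge0$. - A set $A\subseteq V'$ is feasible for (GDSP) if $A\neq\emptyset$, $k_j\le \mathrm{vol}_{M_j}(A)\le l_j$ for all $j$, and $\mathrm{dist}(u,v)\le d_0$ for all $u,v\in A$. - (GDSP) is the problem of maximizing $\dfrac{\mathrm{assoc}_S(A)}{\mathrm{vol}_g(A)+\nu_S}$ over feasible $A$. Penalty: $\mathrm{pen}(\emptyset)=0$,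 and for $A\ne\emptyset$, $$\mathrm{pen}(A)=\sum_{j=1}^p\max\{0,\mathrm{vol}_{M_j}(A)-l_j\}+\sum_{j=1}^p\max\{0,k_j-\mathrm{vol}_{M_j}(A)\}+\sum_{u,v\in A}\max\{0,\mathrm{dist}(u,v)-d_0\}.$$ *)

(* R is an arbitrary real field (the statement is purely
   algebraic/order-theoretic). *)
From HB Require Import structures.
From mathcomp Require Import all_boot all_order all_algebra.
Set Implicit Arguments. Unset Strict Implicit. Unset Printing Implicit Defensive.
Import Order.TTheory GRing.Theory Num.Theory.
Local Open Scope ring_scope.

Section GDSP.
Variables (R : realFieldType) (V : finType).

Definition deg (w : V -> V -> R) (i : V) : R := \sum_(j : V) w i j.
Definition vol (h : V -> R) (A : {set V}) : R := \sum_(i in A) h i.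
Definition assoc (w : V -> V -> R) (A : {set V}) : R :=
  \sum_(i in A) \sum_(j in A) w i j.
Definition cut (w : V -> V -> R) (A B : {set V}) : R :=
  \sum_(i in A) \sum_(j in B) w i j.
Definition degS (w : V -> V -> R) (S : {set V}) (i : V) : R :=
  \sum_(j in S) w i j.
Definition unitset (A : {set V}) : R := if A == set0 then 0 else 1.

(* assoc_S(A) for A ⊆ V' = V \ S *)
Definition assocS (w : V -> V -> R) (S A : {set V}) : R :=
  vol (deg w) A - cut w A (~: S :\: A) + vol (degS w S) A
  + assoc w S * unitset A.

Definition feasible (p : nat) (M : 'I_p -> V -> R) (k l : 'I_p -> R)
  (dist : V -> V -> R) (d0 : R) (S A : {set V}) : Prop :=
  [/\ A \subset ~: S, A != set0,
      (forall j, k j <= vol (M j) A <= l j)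
    & (forall u v, u \in A -> v \in A -> dist u v <= d0)].

Definition gdsp_obj (w : V -> V -> R) (g : V -> R) (S A : {set V}) : R :=
  assocS w S A / (vol g A + vol g S).

Definition gdsp_optimal (p : nat) (M : 'I_p -> V -> R) (k l : 'I_p -> R)
  (dist : V -> V -> R) (d0 : R) (w : V -> V -> R) (g : V -> R)
  (S A : {set V}) : Prop :=
  feasible M k l dist d0 S A /\
  (forall B : {set V}, feasible M k l dist d0 S B -> gdsp_obj w g S B <= gdsp_obj w g S A).

Definition pen (p : nat) (M : 'I_p -> V -> R) (k l : 'I_p -> R)
  (dist : V -> V -> R) (d0 : R) (A : {set V}) : R :=
  if A == set0 then 0 else
  \sum_(j < p) Num.max 0 (vol (M j) A - l j)
  + \sum_(j < p) Num.max 0 (k j - vol (M j) A)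
  + \sum_(u in A) \sum_(v in A) Num.max 0 (dist u v - d0).

(* U(A) as an extended real: None stands for +infinity (the convention
   x/0 = +oo; the numerator is > 0 for nonempty A). *)
Definition Uval (p : nat) (M : 'I_p -> V -> R) (k l : 'I_p -> R)
  (dist : V -> V -> R) (d0 : R) (w : V -> V -> R) (g : V -> R) (gamma : R)
  (S A : {set V}) : option R :=
  if assocS w S A == 0 then None
  else Some ((vol g A + vol g S * unitset A + gamma * pen M k l dist d0 A)
             / assocS w S A).

Definition ext_le (x y : option R) : bool :=
  match x, y with
  | _, None => true
  | None, Some _ => false
  | Some a, Some b => a <= b
  end.

Definition U_minimizer (p : nat) (M : 'I_p -> V -> R) (k l : 'I_p -> R)
  (dist : V -> V -> R) (d0 : R) (w : V -> V -> R) (g : V -> R) (gamma : R)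
  (S A : {set V}) : Prop :=
  [/\ A \subset ~: S, A != set0 &
      forall B : {set V}, B \subset ~: S -> B != set0 ->
        ext_le (Uval M k l dist d0 w g gamma S A) (Uval M k l dist d0 w g gamma S B)].

Definition is_theta (p : nat) (M : 'I_p -> V -> R) (k l : 'I_p -> R)
  (dist : V -> V -> R) (d0 : R) (S : {set V}) (theta : R) : Prop :=
  (exists A : {set V}, [/\ A \subset ~: S, A != set0, ~ feasible M k l dist d0 S A
                & pen M k l dist d0 A = theta]) /\
  (forall A : {set V}, A \subset ~: S -> A != set0 -> ~ feasible M k l dist d0 S A ->
     theta <= pen M k l dist d0 A).

End GDSP.

(* Let c be the optimal value of (GDSP).  On a feasible set the penalty vanishes
   and U is the reciprocal of the GDSP objective, so U >= 1/c there, with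
   equality exactly at the optimal solutions.  On an infeasible set A the
   penalty is at least theta and assoc_S(A) <= vol_d(V), hence
   U(A) >= gamma theta / vol_d(V) > (vol_g(A0) + nu_S) / assoc_S(A0) >= 1/c
   by the choice of gamma.
   So 1/c is the minimum of U, attained exactly at the optimal solutions. *)
From Pilot Require Import Defs.
From HB Require Import structures.
From mathcomp Require Import all_boot all_order all_algebra lra.
Import Order.TTheory GRing.Theory Num.Theory.
Local Open Scope ring_scope.

Section NonnegSums.
Context {R : numDomainType} {I : finType} {F : I -> R}.
Hypothesis F_ge0 : forall i, 0 <= F i.

Lemma ler_psum_subset (P Q : pred I) :
  (forall i, P i -> Q i) -> \sum_(i | P i) F i <= \sum_(i | Q i) F i.
Proof.
move=> sPQ; rewrite [leRHS](bigID P) /=.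
have -> : \sum_(i | Q i && P i) F i = \sum_(i | P i) F i.
  by apply: eq_bigl => i; case: (boolP (P i)) => [/sPQ ->|]; rewrite ?andbF.
by rewrite lerDl sumr_ge0.
Qed.

End NonnegSums.

Section Association.
Context {R : realFieldType} {V : finType} {w : V -> V -> R}.
Hypotheses (w_nneg : forall i j, 0 <= w i j) (w_sym : forall i j, w i j = w j i).

Lemma unitset_ge0 (A : {set V}) : 0 <= unitset R A.
Proof. by rewrite /unitset; case: ifP. Qed.

Lemma unitset_le1 (A : {set V}) : unitset R A <= 1.
Proof. by rewrite /unitset; case: ifP. Qed.

Lemma assoc_ge0 (A : {set V}) : 0 <= assoc w A.
Proof. by do 2!apply: sumr_ge0 => ? _. Qed.

Lemma assocS_ge0 (S A : {set V}) : 0 <= assocS w S A.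
Proof.
rewrite /assocS /vol /cut -sumrB !addr_ge0 ?mulr_ge0 ?assoc_ge0 ?unitset_ge0 //.
- by apply: sumr_ge0 => i _; rewrite subr_ge0 ler_psum_subset.
- by apply: sumr_ge0 => i _; apply: sumr_ge0.
Qed.

Lemma vol_degS_add_assoc_le {S A : {set V}} : [disjoint A & S] ->
  vol (degS w S) A + assoc w S <= vol (deg w) S.
Proof.
move=> dAS; rewrite /vol /degS exchange_big /assoc -big_split /=.
apply: ler_sum => i _.
under eq_bigr do rewrite w_sym.
by rewrite -bigU // ler_psum_subset.
Qed.

Lemma assocS_le_vol_deg {S A : {set V}} :
  A \subset ~: S -> assocS w S A <= vol (deg w) [set: V].
Proof.
rewrite -disjoints_subset => dAS.
have cut_ge0 : 0 <= cut w A (~: S :\: A) by do 2!apply: sumr_ge0 => ? _.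
have assoc_unit_le : assoc w S * unitset R A <= assoc w S.
  by rewrite ler_piMr ?assoc_ge0 ?unitset_le1.
have := vol_degS_add_assoc_le dAS.
have : vol (deg w) A + vol (deg w) S <= vol (deg w) [set: V].
  by rewrite /vol -bigU // ler_psum_subset // => i; apply: sumr_ge0.
rewrite /assocS; lra.
Qed.

End Association.

Section Penalty.
Context {R : realFieldType} {V : finType} {p : nat} {M : 'I_p -> V -> R}
  {k l : 'I_p -> R} {dist : V -> V -> R} {d0 : R} {S : {set V}}.

Local Notation feasible := (feasible M k l dist d0 S).
Local Notation pen := (pen M k l dist d0).

Definition feasibleb (A : {set V}) : bool :=
  [&& A \subset ~: S, A != set0,
      [forall j, k j <= vol (M j) A <= l j] &
      [forall u in A, forall v in A, dist u v <= d0]].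

Lemma feasibleP (A : {set V}) : reflect (feasible A) (feasibleb A).
Proof.
apply: (iffP and4P) => -[AS An0 vol_ok dist_ok]; split => //.
- by move=> j; move/forallP: vol_ok.
- by move=> u v uA vA; move/forall_inP/(_ u uA)/forall_inP: dist_ok; apply.
- exact/forallP.
- by apply/forall_inP => u uA; apply/forall_inP => v vA; apply: dist_ok.
Qed.

Lemma pen_ge0 (A : {set V}) : 0 <= pen A.
Proof.
rewrite /Defs.pen; case: ifP => // _.
by rewrite !addr_ge0 //; do ?[apply: sumr_ge0 => ? _]; rewrite le_max lexx.
Qed.

Lemma pen_feasible {A : {set V}} : feasible A -> pen A = 0.
Proof.
case=> _ An0 vol_ok dist_ok; rewrite /Defs.pen (negbTE An0).
rewrite !big1 ?addr0 // => [u uA|j _|j _]; first rewrite big1 // => v vA.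
all: apply/max_idPl; rewrite subr_le0.
- exact: dist_ok.
- by case/andP: (vol_ok j).
- by case/andP: (vol_ok j).
Qed.

Lemma pen_eq0_feasible {A : {set V}} :
  A \subset ~: S -> A != set0 -> pen A = 0 -> feasible A.
Proof.
move=> AS An0; rewrite /Defs.pen (negbTE An0).
have max_ge0 (x : R) : 0 <= Num.max 0 x by rewrite le_max lexx.
have max_eq0 (x : R) : Num.max 0 x = 0 -> x <= 0 by move/max_idPl.
have far_ge0 u : 0 <= \sum_(v in A) Num.max 0 (dist u v - d0).
  exact: sumr_ge0.
move/eqP; rewrite !paddr_eq0 ?addr_ge0 ?sumr_ge0 //.
case/andP=> /andP[/eqP over /eqP under] /eqP far; split => //.
- move=> j; have /max_eq0 := psumr_eq0P (fun j _ => max_ge0 _) over (i := j) isT.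
  have /max_eq0 := psumr_eq0P (fun j _ => max_ge0 _) under (i := j) isT.
  by rewrite !subr_le0 => -> ->.
- move=> u v uA vA; rewrite -subr_le0; apply: max_eq0.
  have far_u := psumr_eq0P (fun u _ => far_ge0 u) far uA.
  exact: psumr_eq0P (fun v _ => max_ge0 _) far_u _ vA.
Qed.

Lemma pen_gt0 {A : {set V}} :
  A \subset ~: S -> A != set0 -> ~ feasible A -> 0 < pen A.
Proof.
move=> AS An0 Ainf; rewrite lt_def pen_ge0 andbT.
by apply/eqP => /(pen_eq0_feasible AS An0).
Qed.

End Penalty.

Section PenaltyReduction.
Context {R : realFieldType} {V : finType} {w : V -> V -> R}.
Hypotheses (w_nneg : forall i j, 0 <= w i j) (w_sym : forall i j, w i j = w j i).
Context {S : {set V}} {g : V -> R}.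
Hypothesis g_pos : forall i, 0 < g i.
Context {p : nat} {M : 'I_p -> V -> R} {k l : 'I_p -> R}
  {dist : V -> V -> R} {d0 : R} {gamma : R}.

Local Notation feasible := (feasible M k l dist d0 S).
Local Notation feasibleb := (@feasibleb R V p M k l dist d0 S).
Local Notation feasibleP := (@feasibleP R V p M k l dist d0 S).
Local Notation pen := (pen M k l dist d0).
Local Notation f := (gdsp_obj w g S).
Local Notation optimal := (gdsp_optimal M k l dist d0 w g S).
Local Notation U := (Uval M k l dist d0 w g gamma S).
Local Notation U_minimizer := (U_minimizer M k l dist d0 w g gamma S).

Lemma gdsp_den_gt0 {A : {set V}} : A != set0 -> 0 < vol g A + vol g S.
Proof.
have g_ge0 i : 0 <= g i by apply: ltW.
case/set0Pn=> x xA; have vol_gS_ge0 : 0 <= vol g S by apply: sumr_ge0.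
by rewrite ltr_wpDr // /vol (bigD1 x) //= ltr_wpDr ?sumr_ge0.
Qed.

Lemma exists_gdsp_optimal {A0 : {set V}} : feasible A0 -> exists B, optimal B.
Proof.
move=> /feasibleP A0feas; exists [arg max_(B > A0 | feasibleb B) f B]%O.
case: arg_maxP => // B /feasibleP Bfeas Bmax.
by split => // C /feasibleP; apply: Bmax.
Qed.

Lemma Uval_feasible {A : {set V}} :
  feasible A -> assocS w S A != 0 -> U A = Some (f A)^-1.
Proof.
move=> Afeas assoc_neq0; rewrite /Uval (negbTE assoc_neq0) (pen_feasible Afeas).
case: Afeas => _ An0 _ _; rewrite /unitset (negbTE An0).
by rewrite mulr0 addr0 mulr1 /gdsp_obj invf_div.
Qed.

Lemma exists_theta_le_pen {A : {set V}} :
  A \subset ~: S -> A != set0 -> ~ feasible A ->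
  exists2 theta, is_theta M k l dist d0 S theta & theta <= pen A.
Proof.
move=> AS An0 Ainf.
pose infeasible (B : {set V}) := [&& B \subset ~: S, B != set0 & ~~ feasibleb B].
have infeasibleP (B : {set V}) :
    infeasible B <-> [/\ B \subset ~: S, B != set0 & ~ feasible B].
  split=> [/and3P[BS Bn0 nfeas]|[BS Bn0 Binf]].
    by split=> // /feasibleP; apply/negP.
  by rewrite /infeasible BS Bn0; apply/negP => /feasibleP.
have infA : infeasible A by apply/infeasibleP.
case: (arg_minP pen infA) => B /infeasibleP[BS Bn0 Binf] Bmin.
exists (pen B); last exact: Bmin.
split=> [|C CS Cn0 Cinf]; first by exists B.
by apply: Bmin; apply/infeasibleP.
Qed.

Context {A0 : {set V}}.
Hypotheses (A0_feas : feasible A0) (A0_pos : 0 < assocS w S A0).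
Hypothesis gamma_large : forall theta, is_theta M k l dist d0 S theta ->
  vol (deg w) [set: V] / theta * ((vol g A0 + vol g S) / assocS w S A0) < gamma.

Lemma gdsp_obj_A0_gt0 : 0 < f A0.
Proof. by case: A0_feas => _ A0n0 _ _; rewrite divr_gt0 ?gdsp_den_gt0. Qed.

Lemma Uval_infeasible_gt {A : {set V}} :
  A \subset ~: S -> A != set0 -> ~ feasible A -> assocS w S A != 0 ->
  exists2 u, U A = Some u & (f A0)^-1 < u.
Proof.
move=> AS An0 Ainf assoc_neq0.
have [theta theta_def theta_le] := exists_theta_le_pen AS An0 Ainf.
have theta_gt0 : 0 < theta.
  by move: theta_def => -[[B [BS Bn0 Binf <-]] _]; exact: pen_gt0 BS Bn0 Binf.
set x := (f A0)^-1; set a := assocS w S A; set D := vol (deg w) [set: V].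
have x_gt0 : 0 < x by rewrite invr_gt0 gdsp_obj_A0_gt0.
have a_gt0 : 0 < a by rewrite lt_def assoc_neq0 assocS_ge0.
have a_le_D : a <= D by apply: assocS_le_vol_deg.
have Dx_lt : D * x < gamma * theta.
  have := gamma_large _ theta_def; rewrite -[(_ + _) / _]invf_div -/x -/D.
  by rewrite mulrAC ltr_pdivrMr.
have ax_lt : a * x < gamma * theta.
  exact: le_lt_trans (ler_wpM2r (ltW x_gt0) a_le_D) Dx_lt.
have gamma_gt0 : 0 < gamma.
  by rewrite -(pmulr_lgt0 _ theta_gt0); apply: lt_trans ax_lt; rewrite mulr_gt0.
set num := vol g A + vol g S * unitset R A + gamma * pen A.
have num_ge : gamma * theta <= num.
  have g_ge0 i : 0 <= g i by apply: ltW.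
  rewrite (le_trans (ler_wpM2l (ltW gamma_gt0) theta_le)) // lerDr.
  by rewrite addr_ge0 ?mulr_ge0 ?unitset_ge0 ?sumr_ge0.
exists (num / a); first by rewrite /Uval (negbTE assoc_neq0).
by rewrite ltr_pdivlMr // mulrC (lt_le_trans ax_lt).
Qed.

Section Optimum.
Context {B : {set V}}.
Hypothesis B_opt : optimal B.

Lemma le_gdsp_optimal {C : {set V}} : feasible C -> f C <= f B.
Proof. exact: B_opt.2. Qed.

Lemma gdsp_optimal_gt0 : 0 < f B.
Proof. exact: lt_le_trans gdsp_obj_A0_gt0 (le_gdsp_optimal A0_feas). Qed.

Lemma gdsp_optimal_value {A : {set V}} : optimal A -> f A = f B.
Proof.
by case=> Afeas Amax; apply/le_anti; rewrite le_gdsp_optimal // Amax //; case: B_opt.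
Qed.

Lemma Uval_ge_optimal {A : {set V}} :
  A \subset ~: S -> A != set0 -> ext_le (Some (f B)^-1) (U A).
Proof.
move=> AS An0; case: (eqVneq (assocS w S A) 0) => [assoc_eq0|assoc_neq0].
  by rewrite /Uval assoc_eq0 eqxx.
have inv_f_B_le : (f B)^-1 <= (f A0)^-1.
  by rewrite lef_pV2 ?posrE ?gdsp_optimal_gt0 ?gdsp_obj_A0_gt0 ?le_gdsp_optimal.
case: (feasibleP A) => [Afeas|Ainf]; last first.
  have [u -> /ltW u_gt] := Uval_infeasible_gt AS An0 Ainf assoc_neq0.
  exact: le_trans inv_f_B_le u_gt.
rewrite Uval_feasible //= lef_pV2 ?posrE ?gdsp_optimal_gt0 ?le_gdsp_optimal //.
by rewrite divr_gt0 ?gdsp_den_gt0 // lt_def assoc_neq0 assocS_ge0.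
Qed.

Lemma Uval_optimal {A : {set V}} : optimal A -> U A = Some (f B)^-1.
Proof.
move=> A_opt; rewrite -(gdsp_optimal_value A_opt).
case: (A_opt) => Afeas _; apply: Uval_feasible => //; apply/eqP => assoc_eq0.
move: gdsp_optimal_gt0; rewrite -(gdsp_optimal_value A_opt).
by rewrite /gdsp_obj assoc_eq0 mul0r ltxx.
Qed.

Lemma Uval_eq_optimal {A : {set V}} :
  A \subset ~: S -> A != set0 -> U A = Some (f B)^-1 -> optimal A.
Proof.
move=> AS An0 UA; case: (eqVneq (assocS w S A) 0) => [assoc_eq0|assoc_neq0].
  by move: UA; rewrite /Uval assoc_eq0 eqxx.
case: (feasibleP A) => [Afeas|Ainf].
  move: UA; rewrite Uval_feasible // => -[/invr_inj fA_eq].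
  by split=> // C Cfeas; rewrite fA_eq le_gdsp_optimal.
have [u UA' u_gt] := Uval_infeasible_gt AS An0 Ainf assoc_neq0.
move: UA u_gt; rewrite UA' => -[->].
by rewrite ltNge lef_pV2 ?posrE ?gdsp_optimal_gt0 ?gdsp_obj_A0_gt0 ?le_gdsp_optimal.
Qed.

Lemma U_minimizer_Uval {A : {set V}} : U_minimizer A -> U A = Some (f B)^-1.
Proof.
case=> AS An0 Amin; have [[BS Bn0 _ _] _] := B_opt.
have := Amin B BS Bn0; have := Uval_ge_optimal AS An0.
rewrite (Uval_optimal B_opt); case: (U A) => //= u lb ub.
by congr Some; apply/le_anti; rewrite ub lb.
Qed.

End Optimum.

Lemma optimal_U_minimizer {A : {set V}} : optimal A -> U_minimizer A.
Proof.
move=> A_opt; have [[AS An0 _ _] _] := A_opt.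
by split=> // C CS Cn0; rewrite (Uval_optimal A_opt A_opt) Uval_ge_optimal.
Qed.

Lemma U_minimizer_optimal {A : {set V}} : U_minimizer A -> optimal A.
Proof.
have [B B_opt] := exists_gdsp_optimal A0_feas.
move=> A_min; have [AS An0 _] := A_min.
exact (Uval_eq_optimal B_opt AS An0 (U_minimizer_Uval B_opt A_min)).
Qed.

End PenaltyReduction.

Theorem theorem1 (R : realFieldType) (V : finType)
  (w : V -> V -> R)
  (w_sym : forall i j, w i j = w j i)
  (w_nneg : forall i j, 0 <= w i j)
  (w_diag : forall i, w i i = 0)
  (S : {set V}) (g : V -> R) (g_pos : forall i, 0 < g i)
  (p : nat) (M : 'I_p -> V -> R) (M_nneg : forall j i, 0 <= M j i)
  (k l : 'I_p -> R)
  (dist : V -> V -> R)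
  (dist_sym : forall u v, dist u v = dist v u)
  (dist_nneg : forall u v, 0 <= dist u v)
  (dist_diag : forall u, dist u u = 0)
  (d0 : R) (d0_nneg : 0 <= d0)
  (A0 : {set V})
  (A0_feas : feasible M k l dist d0 S A0)
  (A0_pos : 0 < assocS w S A0)
  (gamma : R)
  (h_gamma : forall theta, is_theta M k l dist d0 S theta ->
     vol (deg w) [set: V] / theta * ((vol g A0 + vol g S) / assocS w S A0)
       < gamma) :
  (exists A, U_minimizer M k l dist d0 w g gamma S A) /\
  (forall A, U_minimizer M k l dist d0 w g gamma S A ->
     feasible M k l dist d0 S A /\ gdsp_optimal M k l dist d0 w g S A) /\
  (forall A, gdsp_optimal M k l dist d0 w g S A ->
     U_minimizer M k l dist d0 w g gamma S A) /\
  (forall A B, U_minimizer M k l dist d0 w g gamma S A ->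
     gdsp_optimal M k l dist d0 w g S B ->
     Uval M k l dist d0 w g gamma S A = Some (gdsp_obj w g S B)^-1).
Proof.
have [B B_opt] := exists_gdsp_optimal (w := w) (g := g) A0_feas.
have opt_min := optimal_U_minimizer w_nneg w_sym g_pos A0_feas A0_pos h_gamma.
have min_opt := U_minimizer_optimal w_nneg w_sym g_pos A0_feas A0_pos h_gamma.
have min_val := U_minimizer_Uval w_nneg w_sym g_pos A0_feas A0_pos h_gamma.
split; first by exists B; apply: opt_min.
split=> [A /min_opt A_opt|]; first by split=> //; case: A_opt.
by split=> // A B' A_min B'_opt; apply: min_val.
Qed.
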